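(* For all $n\ge 2$ and $0\le k\le n-2$, $$f(n,k)=\sum_{j=0}^{k}\binom{k-j}{j}(-1)^j\,(n-2-j)!.$$
   Context: A complete non-ambiguous matrix (CNM) of size $n$ is an $n\times n$ matrix $M=(m_{i,j})$ with entries in $\{0,1\}$ whose support $T=\{(i,j): m_{i,j}=1\}$ (whose elements are called vertices) satisfies: (1) $(1,1)\in T$; (2) for every $p=(i,j)\in T$ with $p\neq(1,1)$, exactly one of the following holds: there is $(i',j)\in T$ with $i'<i$, or there is $(i,j')\in T$ with $j'<j$; (3) every row and every column of $M$ contains at least one vertex; (4) define the parent of $p=(i,j)\neq(1,1)$ to be $(i',j)$ with $i'<i$ maximal if such a vertex exists, and otherwise $(i,j')$ with $j'<j$ maximal; then every vertex is the parent of either zero or exactly two vertices. A vertex with no children is a leaf. A CNM of size $n$ is upper-diagonal if its leaves are exactly the positions $(i,n+1-i)$, $1\le i\le n$. For $n\ge 2$ and $0\le k\le n-2$, $f(n,k)$ is the number of upper-diagonal CNMs $M$ of size $n$ with $m_{i,n-i}=0$ for $1\le i\le k$ and $m_{k+1,n-k-1}=1$. Binomial coefficients $\binom{a}{b}$ with $b>a\ge 0$ are $0$. *)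

From mathcomp Require Import all_boot all_order all_algebra.
Set Implicit Arguments. Unset Strict Implicit. Unset Printing Implicit Defensive.

(* A 0/1 matrix of size n is
   represented by its support T : {set 'I_n * 'I_n}; indices are 0-based,
   so the paper's position (i,j) is (i-1,j-1) here.  A vertex p = (row, col). *)

Definition is_origin n (p : 'I_n * 'I_n) : bool :=
  (val p.1 == 0) && (val p.2 == 0).

Definition has_above n (T : {set 'I_n * 'I_n}) (p : 'I_n * 'I_n) : bool :=
  [exists q in T, (q.2 == p.2) && (val q.1 < val p.1)].

Definition has_left n (T : {set 'I_n * 'I_n}) (p : 'I_n * 'I_n) : bool :=
  [exists q in T, (q.1 == p.1) && (val q.2 < val p.2)].

Definition parent_of n (T : {set 'I_n * 'I_n}) (v p : 'I_n * 'I_n) : bool :=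
  [&& v \in T, p \in T, ~~ is_origin p &
   if has_above T p then
     [&& v.2 == p.2, val v.1 < val p.1 &
         [forall q in T, (q.2 == p.2) ==> ~~ ((val v.1 < val q.1) && (val q.1 < val p.1))]]
   else
     [&& v.1 == p.1, val v.2 < val p.2 &
         [forall q in T, (q.1 == p.1) ==> ~~ ((val v.2 < val q.2) && (val q.2 < val p.2))]]].

Definition children n (T : {set 'I_n * 'I_n}) (v : 'I_n * 'I_n) : {set 'I_n * 'I_n} :=
  [set p in T | parent_of T v p].

Definition is_CNM n (T : {set 'I_n * 'I_n}) : bool :=
  [&& [exists p in T, is_origin p],
      [forall p in T, ~~ is_origin p ==> (has_above T p (+) has_left T p)],
      [forall i : 'I_n, exists p in T, p.1 == i],
      [forall j : 'I_n, exists p in T, p.2 == j] &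
      [forall v in T, (#|children T v| == 0) || (#|children T v| == 2)]].

Definition leaves n (T : {set 'I_n * 'I_n}) : {set 'I_n * 'I_n} :=
  [set v in T | #|children T v| == 0].

Definition upper_diagonal n (T : {set 'I_n * 'I_n}) : bool :=
  leaves T == [set v : 'I_n * 'I_n | val v.1 + val v.2 == n.-1].

Definition has_vtx n (T : {set 'I_n * 'I_n}) (i j : nat) : bool :=
  [exists p in T, (val p.1 == i) && (val p.2 == j)].

(* f(n,k): m_{i,n-i} = 0 for 1<=i<=k and m_{k+1,n-k-1} = 1 (1-based), i.e.
   0-based: no vertex at (r, n-2-r) for r < k, and a vertex at (k, n-2-k). *)
Definition f_count (n k : nat) : nat :=
  #|[set T : {set 'I_n * 'I_n} |
      [&& is_CNM T, upper_diagonal T,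
          [forall r : 'I_n, (val r < k) ==> ~~ has_vtx T (val r) (n - 2 - val r)] &
          has_vtx T k (n - 2 - k)]]|.

(* An upper-diagonal CNM is determined by its support, and a support is
   admissible exactly when it lies on or above the antidiagonal, contains the origin and
   the whole antidiagonal, and every other vertex has a vertex above it or to its left
   but not both ([ud_CNMP]); the conditions on children and leaves are then automatic.

   If the subdiagonal cell (r, n-2-r) (0-based) is a vertex, its children are the
   antidiagonal leaves (r+1, n-2-r) and (r, n-1-r), each alone in its row and column;
   deleting that row and column is a bijection onto the upper-diagonal CNMs of size n-1
   ([card_subdiag_cherry]).  Hence f(n,k) counts the matrices of size n-1 with no
   subdiagonal vertex in rows < k-1, which yields f(n,k+2) = f(n,k+1) - f(n-1,k), the
   recurrence of the alternating sum, with f(n,0) = f(n,1) = u(n-1), where u(n) is the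
   number of upper-diagonal CNMs of size n.

   Finally u(n) = (n-1)!: let X(r) count the matrices whose antidiagonal cell in row r
   has a vertex above it.  Swapping rows r, r+1 and columns n-2-r, n-1-r exchanges the
   two mixed cases, and a subdiagonal vertex at (r, n-2-r) forces the case counted by
   X(r+1) but not X(r); so X(r+1) = X(r) + u(n-1), while X(0) = 0 and X(n-1) = u(n). *)

From mathcomp Require Import all_boot all_order all_algebra.
From mathcomp Require Import zify.
Set Implicit Arguments. Unset Strict Implicit. Unset Printing Implicit Defensive.

(** * Upper-diagonal CNMs as relations *)

Definition vtx_above (S : nat -> nat -> bool) i j := exists2 i', i' < i & S i' j.
Definition vtx_left (S : nat -> nat -> bool) i j := exists2 j', j' < j & S i j'.

Record ud_rel (n : nat) (S : nat -> nat -> bool) : Prop := UdRel {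
  ud_origin : S 0 0;
  ud_le_antidiag : forall i j, S i j -> i + j <= n.-1;
  ud_antidiag : forall i, i < n -> S i (n.-1 - i);
  ud_above_xor_left : forall i j, S i j -> (0 < i) || (0 < j) ->
     (vtx_above S i j \/ vtx_left S i j) /\ ~ (vtx_above S i j /\ vtx_left S i j) }.

Section UdRel.
Variables (n : nat) (S : nat -> nat -> bool).
Hypothesis udS : ud_rel n S.

Lemma ud_antidiag_at i j : i + j = n.-1 -> S i j.
Proof.
move=> e; case: (posnP n) => [n0|n_gt0].
  have [-> ->] : i = 0 /\ j = 0 by move: e; rewrite n0; lia.
  exact: ud_origin udS.
have lt_in : i < n by lia.
by have := ud_antidiag udS lt_in; rewrite (_ : n.-1 - i = j) //; lia.
Qed.

Lemma ud_only_above i j : S i j -> vtx_above S i j -> ~ vtx_left S i j.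
Proof.
move=> Sij ab lf; have nz : (0 < i) || (0 < j) by case: ab => i'; lia.
by have [_] := ud_above_xor_left udS Sij nz; apply.
Qed.

Lemma ud_only_left i j : S i j -> vtx_left S i j -> ~ vtx_above S i j.
Proof. by move=> Sij lf ab; apply: (ud_only_above Sij ab). Qed.

Lemma ud_above_or_left i j : S i j -> (0 < i) || (0 < j) ->
  vtx_above S i j \/ vtx_left S i j.
Proof. by move=> Sij /(ud_above_xor_left udS Sij) []. Qed.

Lemma ud_antidiag_col_alone i j i' : i + j = n.-1 -> ~ vtx_above S i j ->
  S i' j -> i' = i.
Proof.
move=> e nab Si'; case: (ltngtP i' i) => // lt; first by case: nab; exists i'.
by have := ud_le_antidiag udS Si'; lia.
Qed.

Lemma ud_antidiag_row_alone i j j' : i + j = n.-1 -> vtx_above S i j ->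
  S i j' -> j' = j.
Proof.
move=> e ab Sj'; case: (ltngtP j' j) => // lt; last by have := ud_le_antidiag udS Sj'; lia.
by case: (ud_only_above (ud_antidiag_at e) ab); exists j'.
Qed.

End UdRel.

Section EqRel.
Variables (S1 S2 : nat -> nat -> bool).
Hypothesis eqS : S1 =2 S2.

Lemma eq_vtx_above i j : vtx_above S1 i j <-> vtx_above S2 i j.
Proof. by split=> -[i' lt h]; exists i' => //; move: h; rewrite eqS. Qed.

Lemma eq_vtx_left i j : vtx_left S1 i j <-> vtx_left S2 i j.
Proof. by split=> -[j' lt h]; exists j' => //; move: h; rewrite eqS. Qed.

Lemma eq_ud_rel n : ud_rel n S1 -> ud_rel n S2.
Proof.
case=> o t d x; split=> [|i j|i|i j]; rewrite -?eqS; [exact: o | exact: t | exact: d |].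
by rewrite -eq_vtx_above -eq_vtx_left; apply: x.
Qed.

End EqRel.

Definition vtx_set n (S : nat -> nat -> bool) : {set 'I_n * 'I_n} :=
  [set p : 'I_n * 'I_n | S p.1 p.2].

Section HasVtx.
Variable n : nat.
Implicit Types (T : {set 'I_n * 'I_n}) (p : 'I_n * 'I_n).

Lemma has_vtxP T i j :
  reflect (exists p, [/\ p \in T, val p.1 = i & val p.2 = j]) (has_vtx T i j).
Proof.
apply: (iffP existsP) => [[p /and3P[pT /eqP e1 /eqP e2]]|[p [pT e1 e2]]]; exists p => //.
by rewrite pT e1 e2 !eqxx.
Qed.

Lemma pair_ord_inj p q : val p.1 = val q.1 -> val p.2 = val q.2 -> p = q.
Proof. by case: p q => a b [c d] /= e1 e2; congr pair; apply: val_inj. Qed.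

Lemma has_vtx_mem T p : has_vtx T p.1 p.2 = (p \in T).
Proof.
apply/has_vtxP/idP => [[q [qT e1 e2]]|pT]; last by exists p.
by rewrite -(pair_ord_inj e1 e2).
Qed.

Lemma mem_has_vtx T p : p \in T -> has_vtx T p.1 p.2.
Proof. by rewrite has_vtx_mem. Qed.

Lemma has_vtx_bound T i j : has_vtx T i j -> (i < n) && (j < n).
Proof. by case/has_vtxP=> -[a b] [_ <- <-]; rewrite !ltn_ord. Qed.

Lemma has_vtx_set S i j : has_vtx (vtx_set n S) i j = [&& i < n, j < n & S i j].
Proof.
apply/has_vtxP/and3P => [[p [+ <- <-]]|[lt_in lt_jn Sij]].
  by rewrite inE !ltn_ord.
by exists (Ordinal lt_in, Ordinal lt_jn); rewrite inE.
Qed.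

Lemma vtx_set_has_vtx T : vtx_set n (has_vtx T) = T.
Proof. by apply/setP=> p; rewrite inE has_vtx_mem. Qed.

Lemma has_vtx_set_ud S : 0 < n -> ud_rel n S -> has_vtx (vtx_set n S) =2 S.
Proof.
move=> n_gt0 udS i j; rewrite has_vtx_set.
case Sij: (S i j); rewrite ?andbF //; have := ud_le_antidiag udS Sij; lia.
Qed.

Lemma has_aboveP T p : reflect (vtx_above (has_vtx T) p.1 p.2) (has_above T p).
Proof.
apply: (iffP existsP) => [[q /and3P[qT /eqP <- lt]]|[i lt /has_vtxP[q [qT e1 e2]]]].
  by exists q.1; rewrite // mem_has_vtx.
by exists q; rewrite qT e1 lt -(inj_eq val_inj) e2 eqxx.
Qed.

Lemma has_leftP T p : reflect (vtx_left (has_vtx T) p.1 p.2) (has_left T p).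
Proof.
apply: (iffP existsP) => [[q /and3P[qT /eqP <- lt]]|[j lt /has_vtxP[q [qT e1 e2]]]].
  by exists q.2; rewrite // mem_has_vtx.
by exists q; rewrite qT e2 lt -(inj_eq val_inj) e1 eqxx.
Qed.

End HasVtx.

Lemma eq_vtx_set n S1 S2 : S1 =2 S2 -> vtx_set n S1 = vtx_set n S2.
Proof. by move=> e; apply: eq_finset => p; rewrite e. Qed.

Lemma vtx_set_eq n (T : {set 'I_n * 'I_n}) S : S =2 has_vtx T -> vtx_set n S = T.
Proof. by move/eq_vtx_set->; apply: vtx_set_has_vtx. Qed.


Section Children.
Variables (n : nat) (T : {set 'I_n * 'I_n}).
Implicit Types v w q : 'I_n * 'I_n.

Definition next_below v w := [&& v.2 == w.2, v.1 < w.1 &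
  [forall q in T, (q.2 == w.2) ==> ~~ ((v.1 < q.1) && (q.1 < w.1))]].

Definition next_right v w := [&& v.1 == w.1, v.2 < w.2 &
  [forall q in T, (q.1 == w.1) ==> ~~ ((v.2 < q.2) && (q.2 < w.2))]].

Lemma parent_of_sum v w : parent_of T v w -> v.1 + v.2 < w.1 + w.2.
Proof.
case/and4P=> _ _ _; case: ifP => _ /and3P[/eqP-> lt _]; first by rewrite ltn_add2r.
by rewrite ltn_add2l.
Qed.

Lemma next_below_uniq v w w' : w \in T -> w' \in T ->
  next_below v w -> next_below v w' -> w = w'.
Proof.
move=> wT w'T /and3P[/eqP e lt /forall_inP nb] /and3P[/eqP e' lt' /forall_inP nb'].
have := nb w' w'T; have := nb' w wT; rewrite -e -e' eqxx lt lt' /= -!leqNgt => le le'.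
by apply: pair_ord_inj; [apply/eqP; rewrite eqn_leq le le' | rewrite -e -e'].
Qed.

Lemma next_right_uniq v w w' : w \in T -> w' \in T ->
  next_right v w -> next_right v w' -> w = w'.
Proof.
move=> wT w'T /and3P[/eqP e lt /forall_inP nb] /and3P[/eqP e' lt' /forall_inP nb'].
have := nb w' w'T; have := nb' w wT; rewrite -e -e' eqxx lt lt' /= -!leqNgt => le le'.
by apply: pair_ord_inj; [rewrite -e -e' | apply/eqP; rewrite eqn_leq le le'].
Qed.

Hypothesis udT : ud_rel n (has_vtx T).

Lemma ud_parent_ofE v w : v \in T -> w \in T ->
  parent_of T v w = next_below v w || next_right v w.
Proof.
move=> vT wT.
have nzw : next_below v w || next_right v w -> ~~ is_origin w.
  rewrite /is_origin negb_and -!lt0n => /orP[] /and3P[_ lt _]; apply/orP.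
    by left; apply: leq_ltn_trans lt.
  by right; apply: leq_ltn_trans lt.
rewrite /parent_of vT wT /= -/(next_below v w) -/(next_right v w).
case: ifP => [/has_aboveP ab | /has_aboveP nab].
  have -> : next_right v w = false.
    apply/negbTE/negP=> /and3P[/eqP e lt _].
    by apply: (ud_only_above udT (mem_has_vtx wT) ab); exists v.2; rewrite // -e has_vtx_mem.
  case nb: (next_below v w); last by rewrite andbF.
  by rewrite andbT nzw // nb.
have -> : next_below v w = false.
  apply/negbTE/negP=> /and3P[/eqP e lt _].
  by apply: nab; exists v.1; rewrite // -e has_vtx_mem.
case nr: (next_right v w); last by rewrite andbF.
by rewrite andbT nzw // nr orbT.
Qed.

Lemma children_antidiag v : v.1 + v.2 = n.-1 -> children T v = set0.
Proof.
move=> e; apply/setP=> w; rewrite !inE; apply/negP=> /andP[wT /parent_of_sum].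
by have := ud_le_antidiag udT (mem_has_vtx wT); lia.
Qed.

Lemma exists_next_below v : v \in T -> v.1 + v.2 < n.-1 ->
  exists2 w, w \in T & next_below v w.
Proof.
move=> vT lt_vn.
have lt_an : n.-1 - v.2 < n by have := ltn_ord v.2; lia.
pose a : 'I_n * 'I_n := (Ordinal lt_an, v.2).
have aT : a \in T by rewrite -has_vtx_mem (ud_antidiag_at udT) /=; lia.
have Pa : [&& a \in T, a.2 == v.2 & v.1 < a.1] by rewrite aT eqxx /=; lia.
case: (@arg_minnP _ a (fun w => [&& w \in T, w.2 == v.2 & v.1 < w.1]) (fun w => val w.1) Pa)
  => w /and3P[wT /eqP e lt] minw.
exists w => //; rewrite /next_below e eqxx lt; apply/forall_inP=> q qT.
apply/implyP=> /eqP qe; apply/negP=> /andP[lt1 lt2].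
by have := minw q; rewrite qT qe eqxx lt1 => /(_ isT); rewrite leqNgt lt2.
Qed.

Lemma exists_next_right v : v \in T -> v.1 + v.2 < n.-1 ->
  exists2 w, w \in T & next_right v w.
Proof.
move=> vT lt_vn.
have lt_an : n.-1 - v.1 < n by have := ltn_ord v.1; lia.
pose a : 'I_n * 'I_n := (v.1, Ordinal lt_an).
have aT : a \in T by rewrite -has_vtx_mem (ud_antidiag_at udT) /=; lia.
have Pa : [&& a \in T, a.1 == v.1 & v.2 < a.2] by rewrite aT eqxx /=; lia.
case: (@arg_minnP _ a (fun w => [&& w \in T, w.1 == v.1 & v.2 < w.2]) (fun w => val w.2) Pa)
  => w /and3P[wT /eqP e lt] minw.
exists w => //; rewrite /next_right e eqxx lt; apply/forall_inP=> q qT.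
apply/implyP=> /eqP qe; apply/negP=> /andP[lt1 lt2].
by have := minw q; rewrite qT qe eqxx lt1 => /(_ isT); rewrite leqNgt lt2.
Qed.

Lemma card_children_below_antidiag v : v \in T -> v.1 + v.2 < n.-1 ->
  #|children T v| = 2.
Proof.
move=> vT lt_vn.
have [d dT nbd] := exists_next_below vT lt_vn.
have [r rT nrr] := exists_next_right vT lt_vn.
have -> : children T v = [set d; r].
  apply/setP=> w; rewrite !inE; apply/andP/orP => [[wT]|].
    rewrite ud_parent_ofE // => /orP[nbw|nrw].
      by left; rewrite (next_below_uniq wT dT nbw nbd).
    by right; rewrite (next_right_uniq wT rT nrw nrr).
  by case=> /eqP->; rewrite ud_parent_ofE ?(dT, nbd, rT, nrr, orbT).
rewrite cards2; case: eqP => // dr.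
by case/and3P: nbd => _ + _; case/and3P: nrr => /eqP -> _ _; rewrite dr ltnn.
Qed.

End Children.

Section Characterization.
Variables (n : nat) (T : {set 'I_n * 'I_n}).
Implicit Types v : 'I_n * 'I_n.

Lemma ud_rel_of_CNM : is_CNM T -> upper_diagonal T -> ud_rel n (has_vtx T).
Proof.
case/and5P=> /existsP[o /andP[oT /andP[/eqP o1 /eqP o2]]] /forall_inP xorT _ _ _ /eqP ud.
have leafE v : (v \in leaves T) = (v.1 + v.2 == n.-1) by rewrite ud inE.
have le_antidiag v : v \in T -> v.1 + v.2 <= n.-1.
  move=> vT; case: (@arg_maxnP _ v (fun w => w \in T) (fun w => w.1 + w.2) vT) => w wT maxw.
  suff : w \in leaves T by rewrite leafE => /eqP <-; apply: maxw.
  rewrite inE wT cards_eq0; apply/eqP/setP=> u; rewrite !inE.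
  apply/negP=> /andP[uT /parent_of_sum lt]; have /= := leq_trans lt (maxw u uT).
  by rewrite ltnn.
split.
- by apply/has_vtxP; exists o.
- by move=> i j /has_vtxP[p [pT <- <-]]; apply: le_antidiag.
- move=> i lt_in; have lt_jn : n.-1 - i < n by lia.
  have : (Ordinal lt_in, Ordinal lt_jn) \in leaves T by rewrite leafE /=; apply/eqP; lia.
  by rewrite inE => /andP[/mem_has_vtx].
- move=> i j /has_vtxP[p [pT <- <-]] nz.
  have := xorT p pT; rewrite /is_origin negb_and -!lt0n nz /=.
  by case: has_aboveP; case: has_leftP => //= *; split; try tauto.
Qed.

Hypothesis udT : ud_rel n (has_vtx T).

Lemma ud_le_antidiag_mem v : v \in T -> v.1 + v.2 <= n.-1.
Proof. by move/mem_has_vtx/(ud_le_antidiag udT). Qed.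

Lemma ud_leavesE : leaves T = [set v : 'I_n * 'I_n | v.1 + v.2 == n.-1].
Proof.
apply/setP=> v; rewrite !inE; apply/andP/eqP => [[vT /eqP c0]|e].
  have := ud_le_antidiag_mem vT; rewrite leq_eqVlt => /orP[/eqP //|lt].
  by rewrite (card_children_below_antidiag udT vT lt) in c0.
by rewrite (children_antidiag udT e) cards0 -has_vtx_mem (ud_antidiag_at udT).
Qed.

Lemma CNM_of_ud_rel : is_CNM T && upper_diagonal T.
Proof.
rewrite /upper_diagonal ud_leavesE eqxx andbT.
have diag_row (i : 'I_n) : exists2 j : 'I_n, (i, j) \in T & i + j = n.-1.
  have lt_in := ltn_ord i; have lt_jn : n.-1 - i < n by lia.
  exists (Ordinal lt_jn); last by rewrite /=; lia.
  by rewrite -has_vtx_mem (ud_antidiag_at udT) /=; lia.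
apply/and5P; split.
- have /has_vtxP[p [pT e1 e2]] := ud_origin udT.
  by apply/existsP; exists p; rewrite pT /is_origin e1 e2.
- apply/forall_inP=> p pT; apply/implyP; rewrite /is_origin negb_and -!lt0n => nz.
  have [ab_or_lf nboth] := ud_above_xor_left udT (mem_has_vtx pT) nz.
  by case: has_aboveP; case: has_leftP => //= *; tauto.
- apply/forallP=> i; have [j ijT _] := diag_row i.
  by apply/existsP; exists (i, j); rewrite ijT eqxx.
- apply/forallP=> j; have lt_in : n.-1 - j < n by have := ltn_ord j; lia.
  have [j' ij'T e] := diag_row (Ordinal lt_in).
  have -> : j = j' by apply: val_inj; move: e => /=; have := ltn_ord j; lia.
  by apply/existsP; exists (Ordinal lt_in, j'); rewrite ij'T eqxx.
- apply/forall_inP=> v vT; have := ud_le_antidiag_mem vT; rewrite leq_eqVlt => /orP[/eqP e|lt].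
    by rewrite (children_antidiag udT e) cards0.
  by rewrite (card_children_below_antidiag udT vT lt) orbT.
Qed.

End Characterization.

Definition ud_CNM n (T : {set 'I_n * 'I_n}) := is_CNM T && upper_diagonal T.

Lemma ud_CNMP n (T : {set 'I_n * 'I_n}) : reflect (ud_rel n (has_vtx T)) (ud_CNM T).
Proof.
by apply: (iffP idP) => [/andP[]|]; [apply: ud_rel_of_CNM | apply: CNM_of_ud_rel].
Qed.

Lemma ud_CNM_vtx_set n S : 0 < n -> ud_rel n S -> ud_CNM (vtx_set n S).
Proof.
move=> n_gt0 udS; apply/ud_CNMP.
have e := has_vtx_set_ud n_gt0 udS.
by apply: eq_ud_rel udS => i j; rewrite e.
Qed.

(** * Deleting a cherry *)

Lemma ltn_bump2 h i j : (bump h i < bump h j) = (i < j).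
Proof. by rewrite !ltnNge leq_bump2. Qed.

Lemma unbump_id h i : i <= h -> unbump h i = i.
Proof. by move=> le_ih; rewrite /unbump ltnNge le_ih subn0. Qed.

Lemma ex_bump (P : nat -> Prop) h i :
  (exists2 x, x < i & P (bump h x)) <-> (exists2 y, y < bump h i & y <> h /\ P y).
Proof.
split=> [[x lt Px]|[y lt [/eqP ne Py]]].
  exists (bump h x); first by rewrite ltn_bump2.
  by split=> //; apply/eqP; rewrite eq_sym neq_bump.
exists (unbump h y); last by rewrite (unbumpK ne).
by rewrite -(ltn_bump2 h) (unbumpK ne).
Qed.

(* [r c] locate a cherry: a vertex (r, c) whose children are the leaves (r+1, c) and
   (r, c+1). *)
Definition del_cherry r c (S : nat -> nat -> bool) i j := S (bump r.+1 i) (bump c.+1 j).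

Definition add_cherry r c (S : nat -> nat -> bool) i j :=
  if i == r.+1 then j == c else if j == c.+1 then i == r
  else S (unbump r.+1 i) (unbump c.+1 j).

Lemma add_cherryK r c S : del_cherry r c (add_cherry r c S) =2 S.
Proof.
by move=> i j; rewrite /del_cherry /add_cherry eq_sym (negbTE (neq_bump _ _))
  eq_sym (negbTE (neq_bump _ _)) !bumpK.
Qed.

Lemma eq_del_cherry r c S1 S2 : S1 =2 S2 -> del_cherry r c S1 =2 del_cherry r c S2.
Proof. by move=> e i j; rewrite /del_cherry e. Qed.

Lemma eq_add_cherry r c S1 S2 : S1 =2 S2 -> add_cherry r c S1 =2 add_cherry r c S2.
Proof. by move=> e i j; rewrite /add_cherry e. Qed.

Lemma add_cherry_at r c S : add_cherry r c S r c = S r c.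
Proof. by rewrite /add_cherry !ltn_eqF // !(unbump_id (leqnSn _)). Qed.

Section Cherry.
Variables m r : nat.
Hypothesis lt_rm : r < m.
Local Notation c := (m.-1 - r).

Section DelCherry.
Variable S : nat -> nat -> bool.
Hypotheses (udS : ud_rel m.+1 S) (Src : S r c).

Lemma ud_cherry_row j : S r.+1 j = (j == c).
Proof.
have Sd : S r.+1 c by apply: (ud_antidiag_at udS); lia.
apply/idP/eqP => [Sj|->//]; case: (ltngtP j c) => // [lt|gt].
  by case: (ud_only_above udS Sd); [exists r | exists j].
by have := ud_le_antidiag udS Sj; lia.
Qed.

Lemma ud_cherry_col i : S i c.+1 = (i == r).
Proof.
have Sd : S r c.+1 by apply: (ud_antidiag_at udS); lia.
apply/idP/eqP => [Si|->//]; case: (ltngtP i r) => // [lt|gt].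
  by case: (ud_only_left udS Sd); [exists c | exists i].
by have := ud_le_antidiag udS Si; lia.
Qed.

Lemma del_cherryK : add_cherry r c (del_cherry r c S) =2 S.
Proof.
move=> i j; rewrite /add_cherry /del_cherry.
case: eqP => [->|/eqP ne1]; first by rewrite ud_cherry_row.
case: eqP => [->|/eqP ne2]; first by rewrite ud_cherry_col.
by rewrite !unbumpK.
Qed.

Lemma above_del_cherry i j :
  vtx_above (del_cherry r c S) i j <-> vtx_above S (bump r.+1 i) (bump c.+1 j).
Proof.
rewrite /vtx_above /del_cherry (ex_bump (fun x => S x _)).
split=> [[y lt [_ Sy]]|[y lt Sy]]; first by exists y.
case: (eqVneq y r.+1) => [ey|ne]; last by exists y => //; split=> //; apply/eqP.
move: Sy; rewrite ey ud_cherry_row => /eqP ->.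
by exists r; [move: lt; rewrite ey => /ltnW | split; [lia | exact: Src]].
Qed.

Lemma left_del_cherry i j :
  vtx_left (del_cherry r c S) i j <-> vtx_left S (bump r.+1 i) (bump c.+1 j).
Proof.
rewrite /vtx_left /del_cherry (ex_bump (fun y => S _ y)).
split=> [[y lt [_ Sy]]|[y lt Sy]]; first by exists y.
case: (eqVneq y c.+1) => [ey|ne]; last by exists y => //; split=> //; apply/eqP.
move: Sy; rewrite ey ud_cherry_col => /eqP ->.
by exists c; [move: lt; rewrite ey => /ltnW | split; [lia | exact: Src]].
Qed.

Lemma ud_rel_del_cherry : ud_rel m (del_cherry r c S).
Proof.
split=> [|i j|i lt_im|i j Sij nz].
- by rewrite /del_cherry /bump /=; apply: (ud_origin udS).
- by move/(ud_le_antidiag udS); rewrite /bump; lia.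
- rewrite /del_cherry; case: (eqVneq i r) => [->|ne].
    by rewrite /bump !ltnn.
  by apply: (ud_antidiag_at udS); move/eqP: ne; rewrite /bump; lia.
- have nz' : (0 < bump r.+1 i) || (0 < bump c.+1 j) by move: nz; rewrite /bump; lia.
  have [ab_or_lf nboth] := ud_above_xor_left udS Sij nz'.
  by rewrite above_del_cherry left_del_cherry.
Qed.

End DelCherry.

Section AddCherry.
Variable S : nat -> nat -> bool.
Hypothesis udS : ud_rel m S.

Let Src : S r c. Proof. by have := ud_antidiag udS lt_rm. Qed.

Lemma above_add_cherry i j : i != r.+1 -> j != c.+1 ->
  vtx_above (add_cherry r c S) i j <-> vtx_above S (unbump r.+1 i) (unbump c.+1 j).
Proof.
move=> ne_i ne_j; rewrite /vtx_above; split.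
  case=> i' lt; rewrite /add_cherry (negbTE ne_j).
  case: eqP => [ei' /eqP ej|/eqP ne' Si'].
    exists r; last by rewrite ej !(unbump_id (leqnSn _)).
    by rewrite /unbump; move: ne_i lt => /eqP; rewrite ei'; lia.
  by exists (unbump r.+1 i') => //; rewrite -(ltn_bump2 r.+1) !unbumpK.
case=> x lt Sx; exists (bump r.+1 x); first by rewrite -(unbumpK ne_i) ltn_bump2.
by rewrite /add_cherry eq_sym (negbTE (neq_bump _ _)) (negbTE ne_j) bumpK.
Qed.

Lemma left_add_cherry i j : i != r.+1 -> j != c.+1 ->
  vtx_left (add_cherry r c S) i j <-> vtx_left S (unbump r.+1 i) (unbump c.+1 j).
Proof.
move=> ne_i ne_j; rewrite /vtx_left; split.
  case=> j' lt; rewrite /add_cherry (negbTE ne_i).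
  case: eqP => [ej' /eqP ei|/eqP ne' Sj'].
    exists c; last by rewrite ei !(unbump_id (leqnSn _)).
    by rewrite /unbump; move: ne_j lt => /eqP; rewrite ej'; lia.
  by exists (unbump c.+1 j') => //; rewrite -(ltn_bump2 c.+1) !unbumpK.
case=> y lt Sy; exists (bump c.+1 y); first by rewrite -(unbumpK ne_j) ltn_bump2.
by rewrite /add_cherry (negbTE ne_i) eq_sym (negbTE (neq_bump _ _)) bumpK.
Qed.

Lemma ud_rel_add_cherry : ud_rel m.+1 (add_cherry r c S).
Proof.
have Src' : add_cherry r c S r c by rewrite add_cherry_at.
split=> [|i j|i lt_im|i j Sij nz].
- exact: (ud_origin udS).
- rewrite /add_cherry; case: eqP => [-> /eqP ->|_]; first lia.
  case: eqP => [-> /eqP ->|_]; first lia.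
  by move/(ud_le_antidiag udS); rewrite /unbump; lia.
- rewrite /add_cherry; case: eqP => [ei|/eqP ne_i]; first by apply/eqP; lia.
  case: eqP => [ej|/eqP ne_j]; first by apply/eqP; lia.
  by apply: (ud_antidiag_at udS); move: ne_i ne_j; rewrite /unbump; lia.
- case: (eqVneq i r.+1) => [ei|ne_i].
    move: Sij; rewrite /add_cherry ei eqxx => /eqP ->.
    split; first by left; exists r.
    by case=> _ [j' lt]; rewrite /add_cherry eqxx => /eqP; lia.
  case: (eqVneq j c.+1) => [ej|ne_j].
    move: Sij; rewrite /add_cherry (negbTE ne_i) ej eqxx => /eqP ->.
    split; first by right; exists c.
    by case=> -[i' lt]; rewrite /add_cherry eqxx; case: eqP => [|_ /eqP]; lia.
  move: Sij; rewrite /add_cherry (negbTE ne_i) (negbTE ne_j) => Sij.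
  have nz' : (0 < unbump r.+1 i) || (0 < unbump c.+1 j).
    by move: nz ne_i ne_j; rewrite /unbump; lia.
  have [ab_or_lf nboth] := ud_above_xor_left udS Sij nz'.
  by rewrite above_add_cherry // left_add_cherry.
Qed.

End AddCherry.

End Cherry.

Lemma add_cherry_subdiag m r S s : s < r -> r < m ->
  add_cherry r (m.-1 - r) S s (m.+1 - 2 - s) = (s.+1 < r) && S s (m - 2 - s).
Proof.
move=> lt_sr lt_rm; rewrite /add_cherry (ltn_eqF (leqW lt_sr)).
case: (ltnP s.+1 r) => [lt_s1r|le_rs1].
  have -> : (m.+1 - 2 - s == (m.-1 - r).+1) = false by apply/negbTE; lia.
  rewrite (unbump_id (leqW (ltnW lt_sr))).
  by have -> : unbump (m.-1 - r).+1 (m.+1 - 2 - s) = m - 2 - s by rewrite /unbump; lia.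
have -> : (m.+1 - 2 - s == (m.-1 - r).+1) by apply/eqP; lia.
by rewrite ltn_eqF.
Qed.

Lemma del_cherry_subdiag m r S s : s.+1 < r -> r < m ->
  del_cherry r (m.-1 - r) S s (m - 2 - s) = S s (m.+1 - 2 - s).
Proof.
move=> lt_s1r lt_rm; rewrite /del_cherry.
by have [-> ->] : bump r.+1 s = s /\ bump (m.-1 - r).+1 (m - 2 - s) = m.+1 - 2 - s
  by rewrite /bump; lia.
Qed.


(** * Swapping adjacent rows and columns *)

Definition adj_swap r i := if i == r then r.+1 else if i == r.+1 then r else i.

Lemma adj_swap_l r : adj_swap r r = r.+1.
Proof. by rewrite /adj_swap eqxx. Qed.

Lemma adj_swap_r r : adj_swap r r.+1 = r.
Proof. by rewrite /adj_swap gtn_eqF // eqxx. Qed.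

Lemma adj_swapK r : involutive (adj_swap r).
Proof.
by move=> i; rewrite /adj_swap; do !case: eqP; lia.
Qed.

Lemma ltn_adj_swap r x i : x < i -> ~ (x = r /\ i = r.+1) ->
  adj_swap r x < adj_swap r i.
Proof. by rewrite /adj_swap; do !case: eqP; lia. Qed.

Lemma ex_adj_swap (P : nat -> bool) r i : P (adj_swap r i) -> ~~ (P r && P r.+1) ->
  (exists2 x, x < i & P (adj_swap r x)) <-> (exists2 y, y < adj_swap r i & P y).
Proof.
move=> Pi nboth; split=> [[x lt Px]|[y lt Py]].
  exists (adj_swap r x) => //; apply: ltn_adj_swap => // -[ex ei].
  by move: Px Pi nboth; rewrite ex ei adj_swap_l adj_swap_r => -> ->.
exists (adj_swap r y); last by rewrite adj_swapK.
rewrite -[i in _ < i](adj_swapK r); apply: ltn_adj_swap => // -[ey ei].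
by move: Py Pi nboth; rewrite ey ei => -> ->.
Qed.

Definition swap_rel r a (S : nat -> nat -> bool) i j := S (adj_swap r i) (adj_swap a j).

Lemma swap_relK r a S : swap_rel r a (swap_rel r a S) =2 S.
Proof. by move=> i j; rewrite /swap_rel !adj_swapK. Qed.

Lemma eq_swap_rel r a S1 S2 : S1 =2 S2 -> swap_rel r a S1 =2 swap_rel r a S2.
Proof. by move=> e i j; rewrite /swap_rel e. Qed.

Section SwapRel.
Variables (n r : nat) (S : nat -> nat -> bool).
Local Notation a := (n - 2 - r).
Hypotheses (udS : ud_rel n S) (r_gt0 : 0 < r) (lt_rn : r.+3 <= n) (nSra : ~~ S r a).
Hypothesis no_col_rr1 : forall j, ~~ (S r j && S r.+1 j).
Hypothesis no_row_aa1 : forall i, ~~ (S i a && S i a.+1).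

Lemma ud_rel_swap : ud_rel n (swap_rel r a S).
Proof.
split=> [|i j|i lt_in|i j Sij nz]; rewrite /swap_rel.
- have swap0 h : 0 < h -> adj_swap h 0 = 0 by rewrite /adj_swap; do !case: eqP; lia.
  by rewrite !swap0; [apply: (ud_origin udS) | lia | lia].
- case: (boolP ((i == r.+1) && (j == a.+1))) => [/andP[/eqP-> /eqP->]|nra Sij].
    by rewrite !adj_swap_r (negbTE nSra).
  by have := ud_le_antidiag udS Sij; move: nra; rewrite /adj_swap; do !case: eqP; lia.
- by apply: (ud_antidiag_at udS); rewrite /adj_swap; do !case: eqP; lia.
- have nz' : (0 < adj_swap r i) || (0 < adj_swap a j).
    by move: nz; rewrite /adj_swap; do !case: eqP; lia.
  have [ab_or_lf nboth] := ud_above_xor_left udS Sij nz'.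
  have -> : vtx_above (swap_rel r a S) i j <-> vtx_above S (adj_swap r i) (adj_swap a j).
    exact: (ex_adj_swap (P := fun y => S y (adj_swap a j))).
  have -> : vtx_left (swap_rel r a S) i j <-> vtx_left S (adj_swap r i) (adj_swap a j).
    exact: (ex_adj_swap (P := fun y => S (adj_swap r i) y)).
  by [].
Qed.

End SwapRel.

Section SwapTypes.
Variables (n r : nat) (S : nat -> nat -> bool).
Hypotheses (udS : ud_rel n S) (lt_r1n : r.+1 < n).
Local Notation a := (n - 2 - r).

Let diag_ra1 : r + a.+1 = n.-1. Proof. lia. Qed.
Let diag_r1a : r.+1 + a = n.-1. Proof. lia. Qed.

Lemma ud_subdiag_above : S r a -> ~ vtx_above S r a.+1 /\ vtx_above S r.+1 a.
Proof.
move=> Sra; split; last by exists r.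
by apply: (ud_only_left udS (ud_antidiag_at udS diag_ra1)); exists a.
Qed.

Lemma ud_rel_swap_to_above : ~ vtx_above S r a.+1 -> vtx_above S r.+1 a -> ~~ S r a ->
  [/\ ud_rel n (swap_rel r a S), vtx_above (swap_rel r a S) r a.+1
    & ~ vtx_above (swap_rel r a S) r.+1 a].
Proof.
move=> nab ab nSra.
have col_a1 := ud_antidiag_col_alone udS diag_ra1 nab.
have row_r1 := ud_antidiag_row_alone udS diag_r1a ab.
have [i' lt_i' Si'a] := ab.
have ne_i' : i' != r by apply/eqP=> ei; move: Si'a; rewrite ei (negbTE nSra).
have r_gt0 : 0 < r by move: lt_i' ne_i' => /[swap] /eqP; lia.
have a_gt0 : 0 < a.
  have nz : (0 < r) || (0 < a.+1) by rewrite r_gt0.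
  case: (ud_above_or_left udS (ud_antidiag_at udS diag_ra1) nz) => [/nab []|[j' lt_j' Srj']].
  have ne_j' : j' != a by apply/eqP=> ej; move: Srj'; rewrite ej (negbTE nSra).
  by move: lt_j' ne_j' => /[swap] /eqP; lia.
split.
- apply: ud_rel_swap => //; first lia.
    by move=> j; apply/negP=> /andP[Srj /row_r1 ej]; move: nSra; rewrite -ej Srj.
  by move=> i; apply/negP=> /andP[Sia /col_a1 ei]; move: Sia; rewrite ei (negbTE nSra).
- exists i'; first by move: lt_i' ne_i' => /[swap] /eqP; lia.
  by rewrite /swap_rel adj_swap_r /adj_swap (negbTE ne_i') ltn_eqF //.
- case=> i lt_i; rewrite /swap_rel adj_swap_l => /col_a1.
  by rewrite /adj_swap; do !case: eqP; lia.
Qed.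

Lemma ud_rel_swap_from_above : vtx_above S r a.+1 -> ~ vtx_above S r.+1 a ->
  [/\ ud_rel n (swap_rel r a S), ~ vtx_above (swap_rel r a S) r a.+1,
    vtx_above (swap_rel r a S) r.+1 a & ~~ swap_rel r a S r a].
Proof.
move=> ab nab.
have row_r := ud_antidiag_row_alone udS diag_ra1 ab.
have col_a := ud_antidiag_col_alone udS diag_r1a nab.
have nSr1a1 : ~~ S r.+1 a.+1 by apply/negP=> /(ud_le_antidiag udS); lia.
have [i' lt_i' Si'a1] := ab.
have r_gt0 : 0 < r by lia.
have a_gt0 : 0 < a.
  have nz : (0 < r.+1) || (0 < a) by [].
  by case: (ud_above_or_left udS (ud_antidiag_at udS diag_r1a) nz) => [/nab []|[j' + _]]; lia.
have nSra : ~~ S r a by apply/negP=> /row_r; lia.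
split.
- apply: ud_rel_swap => //; first lia.
    by move=> j; apply/negP=> /andP[/row_r -> Sr1a1]; rewrite Sr1a1 in nSr1a1.
  by move=> i; apply/negP=> /andP[/col_a -> Sr1a1]; rewrite Sr1a1 in nSr1a1.
- case=> i lt_i; rewrite /swap_rel adj_swap_r => Si.
  by case: nab; exists (adj_swap r i) => //; move: lt_i; rewrite /adj_swap; do !case: eqP; lia.
- exists i'; first lia.
  by rewrite /swap_rel adj_swap_l /adj_swap !ltn_eqF //; lia.
- by rewrite /swap_rel adj_swap_l adj_swap_l.
Qed.

End SwapTypes.

(** * Counting *)

Lemma card_in_bij (T1 T2 : finType) (A : {set T1}) (B : {set T2})
    (f : T1 -> T2) (g : T2 -> T1) :
  {in A, forall x, f x \in B} -> {in B, forall y, g y \in A} ->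
  {in A, cancel f g} -> {in B, cancel g f} -> #|A| = #|B|.
Proof.
move=> fA gB fK gK; rewrite -(card_in_imset (can_in_inj fK)).
apply: eq_card => y; apply/imsetP/idP => [[x xA ->]|yB]; first exact: fA.
by exists (g y); rewrite ?gB ?gK.
Qed.

Lemma card_set_split (T : finType) (P Q : pred T) :
  #|[set x | P x]| = #|[set x | P x && Q x]| + #|[set x | P x && ~~ Q x]|.
Proof.
rewrite -(cardsID [set x | Q x] [set x | P x]).
by congr (_ + _); apply: eq_card => x; rewrite !inE andbC.
Qed.

Definition no_subdiag_before n k (T : {set 'I_n * 'I_n}) :=
  [forall s : 'I_n, (val s < k) ==> ~~ has_vtx T s (n - 2 - s)].

Lemma no_subdiag_beforeP n k (T : {set 'I_n * 'I_n}) :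
  reflect (forall s, s < k -> ~~ has_vtx T s (n - 2 - s)) (no_subdiag_before k T).
Proof.
apply: (iffP forallP) => [noT s lt_sk|noT s]; last by apply/implyP/noT.
case: (ltnP s n) => [lt_sn|le_ns]; first by have /implyP := noT (Ordinal lt_sn); apply.
by apply/negP=> /has_vtx_bound; rewrite ltnNge le_ns.
Qed.

Lemma no_subdiag_before0 n (T : {set 'I_n * 'I_n}) : no_subdiag_before 0 T.
Proof. by apply/no_subdiag_beforeP. Qed.

Lemma no_subdiag_beforeS n k (T : {set 'I_n * 'I_n}) :
  no_subdiag_before k.+1 T = no_subdiag_before k T && ~~ has_vtx T k (n - 2 - k).
Proof.
apply/no_subdiag_beforeP/andP => [noT|[/no_subdiag_beforeP noT nD] s].
  by split; [apply/no_subdiag_beforeP => s lt_sk; apply: noT; apply: leqW | apply: noT].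
by rewrite ltnS leq_eqVlt => /orP[/eqP->|/noT].
Qed.

Lemma card_subdiag_cherry m r j : 0 < m -> r < m -> j <= r ->
  #|[set T : {set 'I_m.+1 * 'I_m.+1} |
      [&& ud_CNM T, has_vtx T r (m.+1 - 2 - r) & no_subdiag_before j T]]| =
  #|[set T : {set 'I_m * 'I_m} | ud_CNM T && no_subdiag_before (minn j r.-1) T]|.
Proof.
move=> m_gt0 lt_rm le_jr.
have -> : m.+1 - 2 - r = m.-1 - r by lia.
set c := m.-1 - r.
apply: (card_in_bij (f := fun T => vtx_set m (del_cherry r c (has_vtx T)))
                    (g := fun T => vtx_set m.+1 (add_cherry r c (has_vtx T)))).
- move=> T; rewrite !inE => /and3P[/ud_CNMP udT Src /no_subdiag_beforeP noT].
  have udD := ud_rel_del_cherry lt_rm udT Src.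
  rewrite ud_CNM_vtx_set //=; apply/no_subdiag_beforeP => s lt_s.
  by rewrite (has_vtx_set_ud m_gt0 udD) del_cherry_subdiag //; [apply: noT|]; lia.
- move=> T; rewrite !inE => /andP[/ud_CNMP udT /no_subdiag_beforeP noT].
  have udA := ud_rel_add_cherry lt_rm udT.
  rewrite ud_CNM_vtx_set //= (has_vtx_set_ud _ udA) // add_cherry_at.
  rewrite (ud_antidiag udT lt_rm); apply/no_subdiag_beforeP => s lt_s.
  rewrite (has_vtx_set_ud _ udA) // add_cherry_subdiag //; last lia.
  by case: ltnP => //= lt_s1r; apply: noT; lia.
- move=> T; rewrite inE => /and3P[/ud_CNMP udT Src _].
  apply: vtx_set_eq => i k.
  rewrite (eq_add_cherry _ _ (has_vtx_set_ud m_gt0 (ud_rel_del_cherry lt_rm udT Src))).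
  exact: del_cherryK.
- move=> T; rewrite inE => /andP[/ud_CNMP udT _].
  apply: vtx_set_eq => i k.
  rewrite (eq_del_cherry _ _ (has_vtx_set_ud _ (ud_rel_add_cherry lt_rm udT))) //.
  exact: add_cherryK.
Qed.

Definition antidiag_above n r (T : {set 'I_n * 'I_n}) :=
  [exists i : 'I_n, (val i < r) && has_vtx T i (n.-1 - r)].

Lemma antidiag_aboveP n r j (T : {set 'I_n * 'I_n}) : r + j = n.-1 ->
  reflect (vtx_above (has_vtx T) r j) (antidiag_above r T).
Proof.
move=> e; rewrite /antidiag_above (_ : n.-1 - r = j); last by lia.
apply: (iffP existsP) => [[i /andP[lt Si]]|[i lt Si]]; first by exists i.
by have /andP[lt_in _] := has_vtx_bound Si; exists (Ordinal lt_in); rewrite lt.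
Qed.

Lemma card_swap_above n r : r.+1 < n ->
  #|[set T : {set 'I_n * 'I_n} | [&& ud_CNM T, ~~ antidiag_above r T,
      antidiag_above r.+1 T & ~~ has_vtx T r (n - 2 - r)]]| =
  #|[set T : {set 'I_n * 'I_n} | [&& ud_CNM T, antidiag_above r T &
      ~~ antidiag_above r.+1 T]]|.
Proof.
move=> lt_r1n; have n_gt0 : 0 < n by lia.
have diag_ra1 : r + (n - 2 - r).+1 = n.-1 by lia.
have diag_r1a : r.+1 + (n - 2 - r) = n.-1 by lia.
pose sw (T : {set 'I_n * 'I_n}) := swap_rel r (n - 2 - r) (has_vtx T).
pose A (T : {set 'I_n * 'I_n}) := [&& ud_CNM T, ~~ antidiag_above r T,
  antidiag_above r.+1 T & ~~ has_vtx T r (n - 2 - r)].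
pose B (T : {set 'I_n * 'I_n}) :=
  [&& ud_CNM T, antidiag_above r T & ~~ antidiag_above r.+1 T].
have swE T : ud_rel n (sw T) -> has_vtx (vtx_set n (sw T)) =2 sw T.
  exact: has_vtx_set_ud.
have swK T : ud_rel n (sw T) -> vtx_set n (sw (vtx_set n (sw T))) = T.
  move=> udS; apply: vtx_set_eq => i j.
  exact: etrans (eq_swap_rel _ _ (swE _ udS) i j) (swap_relK _ _ _ i j).
have sw_above T i j : ud_rel n (sw T) -> i + j = n.-1 ->
    reflect (vtx_above (sw T) i j) (antidiag_above i (vtx_set n (sw T))).
  move=> udS e; apply: (equivP (antidiag_aboveP _ e)).
  exact: (eq_vtx_above (swE _ udS) i j).
have swA T : A T -> ud_rel n (sw T) /\ B (vtx_set n (sw T)).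
  case/and4P=> /ud_CNMP udT /(antidiag_aboveP _ diag_ra1) nab.
  move=> /(antidiag_aboveP _ diag_r1a) ab nD.
  have [udS abS nabS] := ud_rel_swap_to_above udT lt_r1n nab ab nD.
  split=> //; rewrite /B ud_CNM_vtx_set //=.
  by apply/andP; split;
    [apply/(sw_above _ _ _ udS diag_ra1) | apply/(sw_above _ _ _ udS diag_r1a)].
have swB T : B T -> ud_rel n (sw T) /\ A (vtx_set n (sw T)).
  case/and3P=> /ud_CNMP udT /(antidiag_aboveP _ diag_ra1) ab /(antidiag_aboveP _ diag_r1a) nab.
  have [udS nabS abS nDS] := ud_rel_swap_from_above udT lt_r1n ab nab.
  split=> //; rewrite /A ud_CNM_vtx_set // (swE _ udS) nDS andbT /=.
  by apply/andP; split;
    [apply/(sw_above _ _ _ udS diag_ra1) | apply/(sw_above _ _ _ udS diag_r1a)].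
change (#|[set T | A T]| = #|[set T | B T]|).
apply: (card_in_bij (f := fun T => vtx_set n (sw T)) (g := fun T => vtx_set n (sw T)))
  => T; rewrite inE.
- by case/swA=> _; rewrite inE.
- by case/swB=> _; rewrite inE.
- by case/swA=> /swK.
- by case/swB=> /swK.
Qed.

Definition ud_count n := #|[set T : {set 'I_n * 'I_n} | ud_CNM T]|.

Lemma card_ud_subdiag m r : 0 < m -> r < m ->
  #|[set T : {set 'I_m.+1 * 'I_m.+1} | ud_CNM T && has_vtx T r (m.+1 - 2 - r)]| =
  ud_count m.
Proof.
move=> m_gt0 lt_rm; have := card_subdiag_cherry m_gt0 lt_rm (leq0n r).
rewrite min0n /ud_count => e.
transitivity #|[set T : {set 'I_m.+1 * 'I_m.+1} |
    [&& ud_CNM T, has_vtx T r (m.+1 - 2 - r) & no_subdiag_before 0 T]]|.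
  by apply: eq_card => T; rewrite !inE no_subdiag_before0 andbT.
by rewrite e; apply: eq_card => T; rewrite !inE no_subdiag_before0 andbT.
Qed.

Section AntidiagAbove.
Variables (n : nat) (T : {set 'I_n * 'I_n}).

Lemma antidiag_above0 : antidiag_above 0 T = false.
Proof. by apply/existsP=> -[i]; rewrite ltn0. Qed.

Lemma ud_antidiag_above_last : 1 < n -> ud_CNM T -> antidiag_above n.-1 T.
Proof.
move=> lt_1n /ud_CNMP udT; apply/(antidiag_aboveP _ (addn0 _)).
have nz : (0 < n.-1) || (0 < 0) by rewrite orbF; lia.
by case: (ud_above_or_left udT (ud_antidiag_at udT (addn0 _)) nz) => // -[].
Qed.

Lemma subdiag_antidiag_above r : r.+1 < n -> ud_CNM T -> has_vtx T r (n - 2 - r) ->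
  ~~ antidiag_above r T && antidiag_above r.+1 T.
Proof.
move=> lt_r1n /ud_CNMP udT D; have [nab ab] := ud_subdiag_above udT lt_r1n D.
have diag_ra1 : r + (n - 2 - r).+1 = n.-1 by lia.
have diag_r1a : r.+1 + (n - 2 - r) = n.-1 by lia.
by apply/andP; split;
  [apply/(antidiag_aboveP _ diag_ra1) | apply/(antidiag_aboveP _ diag_r1a)].
Qed.

End AntidiagAbove.

Definition ud_above_count n r :=
  #|[set T : {set 'I_n * 'I_n} | ud_CNM T && antidiag_above r T]|.

Lemma ud_above_count0 n : ud_above_count n 0 = 0.
Proof.
by apply/eqP; rewrite cards_eq0; apply/eqP/setP=> T; rewrite !inE antidiag_above0 andbF.
Qed.

Lemma ud_above_count_last n : 1 < n -> ud_above_count n n.-1 = ud_count n.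
Proof.
move=> lt_1n; apply: eq_card => T; rewrite !inE.
by case udT: (ud_CNM T); rewrite //= ud_antidiag_above_last.
Qed.

Lemma ud_above_count_succ m r : 0 < m -> r < m ->
  ud_above_count m.+1 r.+1 = ud_above_count m.+1 r + ud_count m.
Proof.
move=> m_gt0 lt_rm; have lt_r1 : r.+1 < m.+1 by [].
rewrite /ud_above_count (card_set_split _ (antidiag_above r)).
rewrite [in RHS](card_set_split _ (antidiag_above r.+1)).
rewrite (card_set_split (fun T => ud_CNM T && antidiag_above r.+1 T && ~~ antidiag_above r T)
           (fun T => has_vtx T r (m.+1 - 2 - r))).
have -> : #|[set T : {set 'I_m.+1 * 'I_m.+1} |
    ud_CNM T && antidiag_above r.+1 T && ~~ antidiag_above r T &&
    has_vtx T r (m.+1 - 2 - r)]| = ud_count m.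
  rewrite -(card_ud_subdiag m_gt0 lt_rm); apply: eq_card => T; rewrite !inE.
  case udT: (ud_CNM T); case D: (has_vtx T r _); rewrite ?andbF //=.
  by have /andP[-> ->] := subdiag_antidiag_above lt_r1 udT D.
have -> : #|[set T : {set 'I_m.+1 * 'I_m.+1} |
    ud_CNM T && antidiag_above r.+1 T && ~~ antidiag_above r T &&
    ~~ has_vtx T r (m.+1 - 2 - r)]| =
  #|[set T : {set 'I_m.+1 * 'I_m.+1} |
    ud_CNM T && antidiag_above r T && ~~ antidiag_above r.+1 T]|.
  transitivity #|[set T : {set 'I_m.+1 * 'I_m.+1} | [&& ud_CNM T, ~~ antidiag_above r T,
      antidiag_above r.+1 T & ~~ has_vtx T r (m.+1 - 2 - r)]]|.
    apply: eq_card => T; rewrite !inE.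
    by case: (ud_CNM T) (antidiag_above r T) (antidiag_above r.+1 T) => [] [] [].
  by rewrite card_swap_above //; apply: eq_card => T; rewrite !inE andbA.
have -> : #|[set T : {set 'I_m.+1 * 'I_m.+1} |
    ud_CNM T && antidiag_above r.+1 T && antidiag_above r T]| =
  #|[set T : {set 'I_m.+1 * 'I_m.+1} |
    ud_CNM T && antidiag_above r T && antidiag_above r.+1 T]|.
  by apply: eq_card => T; rewrite !inE -!andbA [antidiag_above r.+1 T && _]andbC.
by rewrite [ud_count m + _]addnC addnA.
Qed.

Lemma ud_count_succ m : 0 < m -> ud_count m.+1 = m * ud_count m.
Proof.
move=> m_gt0.
have above_mul r : r <= m -> ud_above_count m.+1 r = r * ud_count m.
  elim: r => [_|r IH lt_rm]; first by rewrite ud_above_count0.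
  by rewrite ud_above_count_succ // IH 1?ltnW // mulSn addnC.
by rewrite -(ud_above_count_last (_ : 1 < m.+1)) // above_mul.
Qed.

Lemma ud_count1 : ud_count 1 = 1.
Proof.
pose S i j := (i == 0) && (j == 0).
have udS : ud_rel 1 S.
  split=> [//|i j /andP[/eqP-> /eqP->] //|i|i j /andP[/eqP-> /eqP->] //].
  by rewrite ltnS leqn0 => /eqP->.
rewrite /ud_count -[RHS](cards1 (vtx_set 1 S)); apply: eq_card => T; rewrite !inE.
apply/idP/eqP => [/ud_CNMP udT|->]; last exact: ud_CNM_vtx_set.
by apply/setP=> -[[[|//] ?] [[|//] ?]]; rewrite inE -has_vtx_mem /= (ud_origin udT).
Qed.

Lemma ud_count_fact n : 0 < n -> ud_count n = n.-1`!.
Proof.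
elim: n => [//|[|m] IH _]; first by rewrite ud_count1.
by rewrite ud_count_succ // IH.
Qed.

Definition ud_avoid_count n k :=
  #|[set T : {set 'I_n * 'I_n} | ud_CNM T && no_subdiag_before k T]|.

Lemma ud_avoid_count0 n : ud_avoid_count n 0 = ud_count n.
Proof. by apply: eq_card => T; rewrite !inE no_subdiag_before0 andbT. Qed.

Lemma ud_avoid_count_split n k :
  ud_avoid_count n k = ud_avoid_count n k.+1 + f_count n k.
Proof.
rewrite /ud_avoid_count (card_set_split _ (fun T => ~~ has_vtx T k (n - 2 - k))).
congr (_ + _); apply: eq_card => T; rewrite !inE; first by rewrite no_subdiag_beforeS andbA.
by rewrite negbK /ud_CNM -!andbA.
Qed.

Lemma f_count_cherry m k : 0 < m -> k < m -> f_count m.+1 k = ud_avoid_count m k.-1.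
Proof.
move=> m_gt0 lt_km; have := card_subdiag_cherry m_gt0 lt_km (leqnn k).
rewrite (_ : minn k k.-1 = k.-1); last by lia.
rewrite /f_count /ud_avoid_count => <-; apply: eq_card => T; rewrite !inE /ud_CNM.
by case: (is_CNM T) (upper_diagonal T) (has_vtx T k _) => [] [] []; rewrite /= ?andbT ?andbF.
Qed.

Lemma f_count_rec m k : k.+2 < m ->
  f_count m.+1 k.+2 + f_count m k = f_count m.+1 k.+1.
Proof.
move=> lt_k2m; have m_gt0 : 0 < m by lia.
rewrite !f_count_cherry // 1?ltnW //.
by rewrite [ud_avoid_count m k]ud_avoid_count_split.
Qed.

(** * The alternating sum *)

Import GRing.Theory.
Local Open Scope ring_scope.

Definition f_formula (n k : nat) : int :=
  \sum_(0 <= j < k.+1) ((-1) ^+ j * ('C(k - j, j) * (n - 2 - j)`!)%:Z : int).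

Lemma binS_sub k i : (i <= k.+1)%N ->
  'C(k.+1 - i, i.+1) = ('C(k - i, i.+1) + 'C(k - i, i))%N.
Proof.
rewrite leq_eqVlt ltnS => /orP[/eqP->|le_ik]; last by rewrite subSn // binS.
by rewrite subnn (_ : k - k.+1 = 0)%N ?bin0n //; apply/eqP; rewrite subn_eq0.
Qed.

Lemma f_formula0 n : f_formula n 0 = (n - 2)`!%:Z.
Proof. by rewrite /f_formula big_nat1 expr0 mul1r subn0 bin0 mul1n subn0. Qed.

Lemma f_formula1 n : f_formula n 1 = (n - 2)`!%:Z.
Proof.
rewrite /f_formula big_nat_recr //= big_nat1 expr0 mul1r !subn0 bin0 mul1n.
by rewrite subnn bin0n mul0n mulr0 addr0.
Qed.

Lemma f_formula_rec n k : f_formula n k.+2 = f_formula n k.+1 - f_formula n.-1 k.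
Proof.
rewrite /f_formula !big_mkord big_ord_recl [X in _ = X - _]big_ord_recl /=.
rewrite !subn0 !bin0 !mul1n !expr0 !mul1r -addrA; congr (_ + _).
have term (i : 'I_k.+2) :
    ((-1) ^+ (bump 0 i) * ('C(k.+2 - bump 0 i, bump 0 i) * (n - 2 - bump 0 i)`!)%:Z : int)
  = (-1) ^+ i.+1 * ('C(k - i, i.+1) * (n - 2 - i.+1)`!)%:Z
    - (-1) ^+ i * ('C(k - i, i) * (n.-1 - 2 - i)`!)%:Z.
  have le_ik : (i <= k.+1)%N := ltn_ord i.
  rewrite /bump leq0n add1n subSS (binS_sub le_ik) mulnDl PoszD mulrDr exprS mulN1r.
  by rewrite mulNr (_ : n.-1 - 2 - i = n - 2 - i.+1)%N //; lia.
rewrite (eq_bigr _ (fun i _ => term i)) sumrB.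
rewrite [X in X - _ = _]big_ord_recr [X in _ - X = _]big_ord_recr /=.
rewrite (_ : k - k.+1 = 0)%N; last by apply/eqP; rewrite subn_eq0.
by rewrite !bin0n /= !mul0n !mulr0 !addr0.
Qed.

Theorem theorem4p10 (n k : nat) (hn : (2 <= n)%N) (hk : (k <= n - 2)%N) :
  (f_count n k)%:Z =
  \sum_(0 <= j < k.+1) ((-1) ^+ j * ('C(k - j, j) * (n - 2 - j)`!)%:Z : int).
Proof.
rewrite -[RHS]/(f_formula n k); case: n hn hk => [//|m] m_gt0; rewrite subSS subn1.
elim/ltn_ind: k m m_gt0 => -[|[|k]] IH m m_gt0 le_k.
- by rewrite f_count_cherry // ud_avoid_count0 ud_count_fact // f_formula0 subSS subn1.
- rewrite f_count_cherry ?ud_avoid_count0 ?ud_count_fact //; last lia.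
  by rewrite f_formula1 subSS subn1.
case: m m_gt0 le_k => [//|m] _ le_k.
have IH1 : (f_count m.+2 k.+1)%:Z = f_formula m.+2 k.+1 by apply: IH; lia.
have IH0 : (f_count m.+1 k)%:Z = f_formula m.+1 k by apply: IH; lia.
rewrite f_formula_rec -IH1 -IH0 -(f_count_rec (m := m.+1) (k := k)); last lia.
by rewrite PoszD addrK.
Qed.
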